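(* Let $(x_c,y_c,\theta_c)\in\mathbb{R}^2\times\mathbb{S}$ and $t_g>0$, and assume there exists an optimal trajectory $(x(t),y(t),\theta(t))$, $t\in[0,t_g]$, of the MECP with duration $t_g$ such that $(x(0),y(0),\theta(0))=(x_c,y_c,\theta_c)$ and $(x(t_g),y(t_g),\theta(t_g))=(0,0,-\pi/2)$. Then for any $T>0$, $$u^*(t_g,x_c,y_c,\theta_c)=\frac{T}{t_g}\,u^*\!\left(T,\frac{T}{t_g}x_c,\frac{T}{t_g}y_c,\theta_c\right).$$
   Context: Kinematics: $\dot x=\cos\theta$, $\dot y=\sin\theta$, $\dot\theta=u$, with state $(x,y,\theta)\in\mathbb{R}^2\times\mathbb{S}$ ($\mathbb{S}$ the circle of angles) and measurable control $u$. The MECP with duration $t_g$ from state $\boldsymbol z_c$: steer the system on a time interval of length $t_g$ from $\boldsymbol z_c$ to the final state $(0,0,-\pi/2)$ while minimizing $\int \tfrac12u^2\,dt$ over that interval. The optimal feedback control $u^*(t_g,\boldsymbol z_c)$ denotes the value at the initial time of the optimal control of the MECP starting at state $\boldsymbol z_c$ with time-to-go $t_g$; equivalently, along an optimal trajectory $\boldsymbol z(t)$ with optimal control $u(t)$ on $[0,t_f]$, $u^*(t_f-t,\boldsymbol z(t))=u(t)$ for all $t\in[0,t_f)$. *)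

From HB Require Import structures.
From mathcomp Require Import all_boot all_order all_algebra.
From mathcomp Require Import all_classical all_reals all_analysis.
Set Implicit Arguments. Unset Strict Implicit. Unset Printing Implicit Defensive.
Import Order.TTheory GRing.Theory Num.Theory.
Import numFieldNormedType.Exports.
Local Open Scope classical_set_scope.
Local Open Scope ring_scope.

Section MECP.
Variable R : realType.
Local Notation mu := (@lebesgue_measure R).

Definition admissible (tf : R) (u : R -> R) : Prop :=
  measurable_fun `[0, tf] u /\
  mu.-integrable `[0, tf] (fun t => ((u t) ^+ 2)%:E).

Definition cost (tf : R) (u : R -> R) : R :=
  Rintegral mu `[0, tf] (fun t => (u t) ^+ 2 / 2).

(* (x, y, th) is the (absolutely continuous) solution on [0, tf] of
   x' = cos th, y' = sin th, th' = u starting at (xc, yc, thc). The angle is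
   represented by a real lift. *)
Definition trajectory (tf xc yc thc : R) (u x y th : R -> R) : Prop :=
  forall t, 0 <= t <= tf ->
    [/\ x t = xc + Rintegral mu `[0, t] (fun s => cos (th s)),
        y t = yc + Rintegral mu `[0, t] (fun s => sin (th s)) &
        th t = thc + Rintegral mu `[0, t] u].

Definition feasible (tf xc yc thc : R) (u : R -> R) : Prop :=
  admissible tf u /\
  exists x y th, trajectory tf xc yc thc u x y th /\
    x tf = 0 /\ y tf = 0 /\
    exists k : int, th tf = - (pi / 2) + k%:~R * (2 * pi).

Definition MECP_optimal (tf xc yc thc : R) (u : R -> R) : Prop :=
  feasible tf xc yc thc u /\
  forall v, feasible tf xc yc thc v -> cost tf u <= cost tf v.

(* "u^*(tf, zc) = v": v is the value at the initial time of an optimal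
   control of the MECP(tf, zc); the value at a point of a measurable control
   is taken for its continuous representative on [0, tf]. *)
Definition ustar_val (tf xc yc thc v : R) : Prop :=
  exists u, MECP_optimal tf xc yc thc u /\
    {within `[0, tf], continuous u} /\ u 0 = v.

End MECP.

(* Rescaling time by a factor k > 0 maps a control u on [0, tf] to
   s |-> k^-1 u(s / k) on [0, k tf]: the heading is reparametrised, the
   planar trajectory is dilated by k, and the energy is multiplied by k^-1
   (substitution t = s / k for Lebesgue integrals). This is a bijection
   between the feasible controls of the two problems that scales all costs by
   the same factor, so it maps optimal controls to optimal controls; its
   initial value is k^-1 u(0). *)

From mathcomp Require Import all_boot all_order all_algebra.
From mathcomp Require Import all_classical all_reals all_analysis.
From mathcomp Require Import measurable_realfun lra.
Set Implicit Arguments. Unset Strict Implicit. Unset Printing Implicit Defensive.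
Import Order.TTheory GRing.Theory Num.Theory.
Import numFieldNormedType.Exports.
Local Open Scope classical_set_scope.
Local Open Scope ring_scope.

Section lebesgue_measure_dilation.
Context {R : realType}.
Local Notation mu := (@lebesgue_measure R).
Context {c : R}.
Hypothesis c_gt0 : 0 < c.
Local Notation dilation := ( *%R c : R -> measurableTypeR R).

Let measurable_dilation : measurable_fun [set: R] dilation.
Proof. exact: mulrl_measurable. Qed.

Lemma preimage_mulr_itv_oc (a b : R) : dilation @^-1` `]a, b] = `]a / c, b / c]%classic.
Proof.
apply/seteqP; split => x /=; rewrite !in_itv /=;
  by rewrite ltr_pdivrMr // ler_pdivlMr // ![x * c]mulrC.
Qed.

Lemma preimage_mulr_itv0_cc (a : R) : dilation @^-1` `[0, c * a] = `[0, a]%classic.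
Proof.
apply/seteqP; split => x /=; rewrite !in_itv /=;
  by rewrite pmulr_rge0 // ler_pM2l.
Qed.

Lemma lebesgue_measure_dilation (A : set R) : measurable A ->
  mu A = (c%:E * pushforward mu dilation A)%E.
Proof.
move=> mA.
apply: (@lebesgue_measure_unique R (mscale (NngNum (ltW c_gt0)) (pushforward mu dilation))) => //.
move=> _ /ocitvP [->|[[a b] /= ab ->]]; first by rewrite !measure0.
change (mu `]a, b]%classic = c%:E * mu (dilation @^-1` `]a, b]%classic))%E.
rewrite preimage_mulr_itv_oc !lebesgue_measure_itv /= !lte_fin ab.
rewrite ltr_pM2r ?invr_gt0 // ab -!EFinB -EFinM -mulrBl mulrCA.
by rewrite divff ?gt_eqF // mulr1.
Qed.

Lemma ge0_integral_dilation (D : set R) (f : R -> \bar R) :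
  measurable D -> measurable_fun D f -> (forall x, D x -> (0 <= f x)%E) ->
  (\int[mu]_(x in dilation @^-1` D) f (c * x)%R =
   c^-1%:E * \int[mu]_(x in D) f x)%E.
Proof.
move=> mD mf f0.
rewrite -ge0_integral_pushforward //; last by move=> y /[!inE]; exact: f0.
rewrite [in RHS](eq_measure_integral (mscale (NngNum (ltW c_gt0))
  (pushforward mu dilation))); last by move=> A mA _; exact: lebesgue_measure_dilation.
by rewrite ge0_integral_mscale //= muleA -EFinM mulVf ?gt_eqF // mul1e.
Qed.

Lemma integrable_dilation (D : set R) (f : R -> R) : measurable D ->
  mu.-integrable D (EFin \o f) ->
  mu.-integrable (dilation @^-1` D) (fun x => (f (c * x))%:E).
Proof.
move=> mD /integrableP [mf fi]; apply/integrableP; split.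
  apply: (measurable_comp mD _ mf); last exact: measurable_funTS.
  by move=> _ [x Dx <-].
rewrite (@ge0_integral_dilation _ (abse \o (EFin \o f)) mD).
- by rewrite lte_mul_pinfty ?lee_fin ?invr_ge0 ?ltW.
- exact: (measurableT_comp (@abse_measurable R setT) mf).
- by move=> x _; exact: abse_ge0.
Qed.

Lemma integral_dilation (D : set R) (f : R -> R) : measurable D ->
  mu.-integrable D (EFin \o f) ->
  (\int[mu]_(x in dilation @^-1` D) (f (c * x)%R)%:E =
   c^-1%:E * \int[mu]_(x in D) (f x)%:E)%E.
Proof.
move=> mD fi; have /integrableP[mf _] := fi.
rewrite integralE [in RHS]integralE muleBr //; last first.
  by rewrite fin_num_adde_defl // fin_numN integrable_neg_fin_num.
congr (_ - _)%E.
- rewrite -ge0_integral_dilation //; last exact: measurable_funepos.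
  by apply: eq_integral => x _; rewrite !funeposE.
- rewrite -ge0_integral_dilation //; last exact: measurable_funeneg.
  by apply: eq_integral => x _; rewrite !funenegE.
Qed.

Lemma integrable_itv0_dilation (a : R) (f : R -> R) :
  mu.-integrable `[0, c * a] (EFin \o f) ->
  mu.-integrable `[0, a] (fun x => (f (c * x))%:E).
Proof. by move=> fi; rewrite -preimage_mulr_itv0_cc; exact: integrable_dilation. Qed.

Lemma Rintegral_itv0_dilation (a : R) (f : R -> R) :
  mu.-integrable `[0, c * a] (EFin \o f) ->
  \int[mu]_(x in `[0, a]) f (c * x) = c^-1 * \int[mu]_(x in `[0, c * a]) f x.
Proof.
move=> fi; rewrite /Rintegral -preimage_mulr_itv0_cc integral_dilation //.
by rewrite fineM // integrable_fin_num.
Qed.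

End lebesgue_measure_dilation.

Section MECP_trajectories.
Context {R : realType}.
Local Notation mu := (@lebesgue_measure R).

Lemma admissible_integrable (tf : R) (u : R -> R) :
  admissible tf u -> mu.-integrable `[0, tf] (EFin \o u).
Proof.
case=> u_meas iu2.
have one_integrable : mu.-integrable `[0, tf] (EFin \o cst (1 : R)).
  by apply: continuous_compact_integrable; [exact: segment_compact|exact: cst_continuous].
apply: (le_integrable _ _ _ (integrableD _ one_integrable iu2)) => //.
  exact/measurable_EFinP.
move=> t _ /=; rewrite lee_fin; apply: le_trans (ler_norm _).
rewrite -real_normK ?num_real //; have := normr_ge0 (u t); nra.
Qed.

Lemma trajectory_angle_integrable (g : R -> R) (tf xc yc thc : R)
    (u x y th : R -> R) :
  continuous g -> 0 <= tf -> admissible tf u ->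
  trajectory tf xc yc thc u x y th ->
  mu.-integrable `[0, tf] (EFin \o (g \o th)).
Proof.
move=> g_cont tf_ge0 adm tr.
have th_cont : {within `[0, tf], continuous
    (fun r => g (thc + parameterized_integral mu 0 r u))}.
  have int_cont := parameterized_integral_continuous tf_ge0 (admissible_integrable adm).
  move=> r; apply: continuous_comp; last exact: g_cont.
  by apply: continuousD; [exact: cst_continuous|exact: int_cont].
have : mu.-integrable `[0, tf]
    (EFin \o (fun r => g (thc + parameterized_integral mu 0 r u))).
  by apply: continuous_compact_integrable; [exact: segment_compact|exact: th_cont].
by apply: eq_integrable => // r /[!inE] /tr[_ _ thE]; rewrite /= thE.
Qed.

End MECP_trajectories.

Section MECP_time_rescaling.
Context {R : realType}.
Local Notation mu := (@lebesgue_measure R).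
Variable k : R.
Hypothesis k_gt0 : 0 < k.

Definition rescale_control (u : R -> R) (s : R) : R := k^-1 * u (k^-1 * s).

Let kV_gt0 : 0 < k^-1. Proof. by rewrite invr_gt0. Qed.

Let kVK (a : R) : k^-1 * (k * a) = a.
Proof. by rewrite mulKf ?gt_eqF. Qed.

Lemma admissible_rescale (tf : R) (u : R -> R) :
  admissible tf u -> admissible (k * tf) (rescale_control u).
Proof.
move=> adm; have [_ iu2] := adm.
have iu : mu.-integrable `[0, k * tf] (fun s => (u (k^-1 * s))%:E).
  by apply: integrable_itv0_dilation; rewrite // kVK; exact: admissible_integrable.
split.
  apply: (measurable_funM (f := cst k^-1)) => //.
  by case/integrableP: iu => /measurable_EFinP.
have iu2k : mu.-integrable `[0, k * tf] (fun s => (u (k^-1 * s) ^+ 2)%:E).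
  by apply: (integrable_itv0_dilation kV_gt0 (f := fun t => u t ^+ 2)); rewrite kVK.
apply: (eq_integrable _ _ _ _ (integrableZl _ (k^-2) iu2k)) => // s _.
by rewrite /rescale_control -EFinM exprMn exprVn.
Qed.

Lemma cost_rescale (tf : R) (u : R -> R) :
  admissible tf u -> cost (k * tf) (rescale_control u) = k^-1 * cost tf u.
Proof.
case=> _ iu2.
have iu2_half : mu.-integrable `[0, tf] (EFin \o (fun t => u t ^+ 2 / 2)).
  by apply: (eq_integrable _ _ _ _ (integrableZl _ 2^-1 iu2)) => // t _; rewrite -EFinM mulrC.
rewrite /cost /rescale_control.
under eq_Rintegral do rewrite exprMn -mulrA.
rewrite RintegralZl //; last first.
  by apply: (integrable_itv0_dilation kV_gt0 (f := fun t => u t ^+ 2 / 2)); rewrite kVK.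
rewrite (Rintegral_itv0_dilation kV_gt0 (f := fun t => u t ^+ 2 / 2)) kVK //.
by rewrite invrK mulrA expr2 -(mulrA k^-1) mulVf ?gt_eqF // mulr1.
Qed.

Lemma trajectory_rescale (tf xc yc thc : R) (u x y th : R -> R) :
  0 <= tf -> admissible tf u -> trajectory tf xc yc thc u x y th ->
  trajectory (k * tf) (k * xc) (k * yc) thc (rescale_control u)
    (fun s => k * x (k^-1 * s)) (fun s => k * y (k^-1 * s))
    (fun s => th (k^-1 * s)).
Proof.
move=> tf_ge0 adm tr s /andP[s_ge0 s_le].
have sk : 0 <= k^-1 * s <= tf.
  by rewrite (mulr_ge0 (ltW kV_gt0) s_ge0) /= -(kVK tf) ler_pM2l.
have integrable_sub (f : R -> \bar R) :
    mu.-integrable `[0, tf] f -> mu.-integrable `[0, k^-1 * s] f.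
  by apply: integrableS => //; apply: subset_itvl; rewrite bnd_simp; case/andP: sk.
have iu := integrable_sub _ (admissible_integrable adm).
have Rint_rescale (f : R -> R) : mu.-integrable `[0, tf] (EFin \o f) ->
    \int[mu]_(r in `[0, s]) f (k^-1 * r) = k * \int[mu]_(r in `[0, k^-1 * s]) f r.
  by move=> /integrable_sub fi; rewrite Rintegral_itv0_dilation ?invrK.
have [-> -> ->] := tr _ sk.
rewrite !mulrDr (Rint_rescale (fun r => cos (th r))); last first.
  exact: trajectory_angle_integrable (@continuous_cos R) tf_ge0 adm tr.
rewrite (Rint_rescale (fun r => sin (th r))); last first.
  exact: trajectory_angle_integrable (@continuous_sin R) tf_ge0 adm tr.
split => //; rewrite /rescale_control RintegralZl //.
  by rewrite (Rint_rescale u) ?kVK // admissible_integrable.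
exact: (integrable_itv0_dilation kV_gt0 iu).
Qed.

Lemma feasible_rescale (tf xc yc thc : R) (u : R -> R) : 0 <= tf ->
  feasible tf xc yc thc u ->
  feasible (k * tf) (k * xc) (k * yc) thc (rescale_control u).
Proof.
move=> tf_ge0 [adm [x [y [th [tr [x_end [y_end th_end]]]]]]].
split; first exact: admissible_rescale.
exists (fun s => k * x (k^-1 * s)), (fun s => k * y (k^-1 * s)), (fun s => th (k^-1 * s)).
by rewrite !kVK x_end y_end mulr0; split => //; exact: trajectory_rescale.
Qed.

Lemma continuous_rescale (tf : R) (u : R -> R) :
  {within `[0, tf], continuous u} ->
  {within `[0, k * tf], continuous (rescale_control u)}.
Proof.
move=> /subspace_continuousP u_cont; apply/subspace_continuousP => s s_in.
have maps_into (r : R) : `[0, k * tf]%classic r -> `[0, tf]%classic (k^-1 * r).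
  rewrite /= !in_itv /= => /andP[r_ge0 r_le].
  by rewrite (mulr_ge0 (ltW kV_gt0) r_ge0) -(kVK tf) ler_pM2l.
have dilation_cvg : (k^-1 * r) @[r --> within `[0, k * tf]%classic (nbhs s)] -->
    within `[0, tf]%classic (nbhs (k^-1 * s)).
  have mulVr_cvg : k^-1 * r @[r --> s] --> k^-1 * s by exact: cvgMl_tmp cvg_id.
  move=> P /= /mulVr_cvg; rewrite !nbhs_simpl /= /within.
  by apply: filterS => r P_r /maps_into; exact: P_r.
apply: cvgMl_tmp; exact: cvg_comp _ _ dilation_cvg (u_cont _ (maps_into _ s_in)).
Qed.

End MECP_time_rescaling.

Lemma MECP_optimal_rescale (R : realType) (k tf xc yc thc : R) (u : R -> R) :
  0 < k -> 0 <= tf -> MECP_optimal tf xc yc thc u ->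
  MECP_optimal (k * tf) (k * xc) (k * yc) thc (rescale_control k u).
Proof.
move=> k_gt0 tf_ge0 [fu u_opt]; split; first exact: feasible_rescale.
move=> v fv; have kV_gt0 : 0 < k^-1 by rewrite invr_gt0.
have ktf_ge0 := mulr_ge0 (ltW k_gt0) tf_ge0.
have := cost_rescale kV_gt0 fv.1; have := feasible_rescale kV_gt0 ktf_ge0 fv.
rewrite !mulKf ?gt_eqF // invrK => /u_opt le_uv cost_v.
by rewrite (cost_rescale k_gt0 fu.1) ler_pdivrMl // -cost_v.
Qed.

Lemma ustar_val_rescale (R : realType) (k tf xc yc thc v : R) :
  0 < k -> 0 <= tf -> ustar_val tf xc yc thc v ->
  ustar_val (k * tf) (k * xc) (k * yc) thc (k^-1 * v).
Proof.
move=> k_gt0 tf_ge0 [u [u_opt [u_cont u0]]]; exists (rescale_control k u).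
split; first exact: MECP_optimal_rescale.
by split; [exact: continuous_rescale|rewrite /rescale_control mulr0 u0].
Qed.

Theorem lemma3 (R : realType) (xc yc thc tg : R) :
  0 < tg ->
  (exists u : R -> R, MECP_optimal tg xc yc thc u) ->
  forall T : R, 0 < T ->
  forall v : R,
    ustar_val tg xc yc thc v <->
    ustar_val T (T / tg * xc) (T / tg * yc) thc (tg / T * v).
Proof.
move=> tg_gt0 _ T T_gt0 v.
have tgT_gt0 : 0 < tg / T by rewrite divr_gt0.
have Ttg_gt0 : 0 < T / tg by rewrite divr_gt0.
split => [/(ustar_val_rescale Ttg_gt0 (ltW tg_gt0))|].
  by rewrite mulrVK ?unitfE ?gt_eqF // invf_div.
move=> /(ustar_val_rescale tgT_gt0 (ltW T_gt0)).
by rewrite mulrVK ?unitfE ?gt_eqF // -(invf_div tg T) !mulVKf ?mulKf ?gt_eqF.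
Qed.
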